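(* For a polymatroid $\mathrm P$ on $E$ of type $\mathbf a$, one has $\mathrm M_\pi(\mathrm P^\perp)=\mathrm M_\pi(\mathrm P)^\perp$.
   Context: $E=\{1,\dots,m\}$, $\mathbf a\in\mathbb Z^m_{\ge0}$, $n=\sum a_i$, $\widetilde E$ an $n$-element set, $\pi:\widetilde E\to E$ with $|\pi^{-1}(i)|=a_i$. Polymatroid of type $\mathbf a$: submodular monotone $\operatorname{rk}_{\mathrm P}:2^E\to\mathbb Z_{\ge0}$ with $\operatorname{rk}_{\mathrm P}(\emptyset)=0$, $\operatorname{rk}_{\mathrm P}(\{i\})\le a_i$, rank $r=\operatorname{rk}_{\mathrm P}(E)$. Its dual $\mathrm P^\perp$ is the type-$\mathbf a$ polymatroid with $\operatorname{rk}_{\mathrm P^\perp}(S)=\sum_{i\in S}a_i+\operatorname{rk}_{\mathrm P}(E\setminus S)-r$. The multisymmetric lift $\mathrm M_\pi(\mathrm P)$ is the matroid on $\widetilde E$ with rank function $\operatorname{rk}(U)=\min_{A\subseteq E}\{\operatorname{rk}_{\mathrm P}(A)+|U\setminus\pi^{-1}(A)|\}$. $\mathrm M^\perp$ is the usual matroid dual. *)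

From mathcomp Require Import all_boot.
Set Implicit Arguments. Unset Strict Implicit. Unset Printing Implicit Defensive.

Definition is_polymatroid (m : nat) (a : 'I_m -> nat) (rk : {set 'I_m} -> nat) : Prop :=
  [/\ rk set0 = 0,
      (forall A B : {set 'I_m}, A \subset B -> rk A <= rk B),
      (forall A B : {set 'I_m}, rk (A :|: B) + rk (A :&: B) <= rk A + rk B)
    & (forall i : 'I_m, rk [set i] <= a i)].

(* Dual polymatroid: rk^perp(S) = sum_{i in S} a_i + rk(E \ S) - rk(E)
   (the expression is always >= 0 for a polymatroid of type a). *)
Definition polymatroid_dual (m : nat) (a : 'I_m -> nat) (rk : {set 'I_m} -> nat)
  (S : {set 'I_m}) : nat :=
  (\sum_(i in S) a i + rk (~: S)) - rk setT.

(* The minimum is over all A; the value at A = set0 (namely #|U|, as rk set0 = 0)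
   is also used as the neutral element of minn, which does not change the min. *)
Definition lift_rank (m : nat) (T : finType) (pi : T -> 'I_m)
  (rk : {set 'I_m} -> nat) (U : {set T}) : nat :=
  \big[minn/ (rk set0 + #|U :\: pi @^-1: set0|)]_(A : {set 'I_m})
     (rk A + #|U :\: pi @^-1: A|).

Definition matroid_dual (T : finType) (r : {set T} -> nat) (U : {set T}) : nat :=
  (#|U| + r (~: U)) - r setT.

(* The lift of P^perp and the dual of the lift of P are both minima over subsets of E.
   For a fixed S, with fibres of total size sum_{i in S} a_i = #|pi^-1(S)|, the term
   rk_{P^perp}(S) + |U \ pi^-1(S)| of the first minimum equals
   |U| + (rk_P(~S) + |~U \ pi^-1(~S)|) - rk_P(E), an increasing function of the term of index ~S
   of the minimum defining rk_{M_pi(P)}(~U).  Complementation being a bijection, the two minima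
   agree, once one knows that the lift has the same total rank rk_P(E) as P. *)
From mathcomp Require Import all_boot.
From mathcomp Require Import zify.

Section BigMin.
Context {J : finType}.

Lemma bigmin_leq (F : J -> nat) (j0 j : J) : \big[minn/F j0]_(k : J) F k <= F j.
Proof.
have : j \in index_enum J by rewrite mem_index_enum.
elim: (index_enum _) => [|k s IH] //=.
rewrite inE big_cons => /orP [/eqP <-|/IH le_min_Fj]; first exact: geq_minl.
exact: leq_trans (geq_minr _ _) le_min_Fj.
Qed.

Lemma bigmin_attained (F : J -> nat) (j0 : J) :
  exists j, \big[minn/F j0]_(k : J) F k = F j.
Proof.
apply: (big_ind (fun x => exists j, x = F j)); first by exists j0.
  by move=> _ _ [j ->] [k ->]; rewrite /minn; case: ltnP; [exists j | exists k].
by move=> j _; exists j.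
Qed.

Lemma bigmin_homo_bij (F G : J -> nat) (f : nat -> nat) (h : J -> J) (i0 j0 : J) :
  bijective h -> {homo f : x y / x <= y} -> (forall j, G j = f (F (h j))) ->
  \big[minn/G i0]_(j : J) G j = f (\big[minn/F j0]_(j : J) F j).
Proof.
move=> [h' hK h'K] f_homo GE; apply/eqP; rewrite eqn_leq; apply/andP; split.
  have [j ->] := bigmin_attained F j0.
  by apply: leq_trans (bigmin_leq _ _ (h' j)) _; rewrite GE h'K.
have [j ->] := bigmin_attained G i0.
by rewrite GE; apply: f_homo; apply: bigmin_leq.
Qed.
End BigMin.
Arguments bigmin_homo_bij {J F G f h i0 j0}.

Lemma card_preimset_fibres (I T : finType) (pi : T -> I) (a : I -> nat) :
  (forall i, #|[set x | pi x == i]| = a i) ->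
  forall S : {set I}, #|pi @^-1: S| = \sum_(i in S) a i.
Proof.
move=> fibres S; rewrite -sum1_card (partition_big pi (mem S)); last by move=> x; rewrite inE.
apply: eq_bigr => i iS; rewrite -fibres -sum1_card; apply: eq_bigl => x.
by rewrite !inE; case: eqP => [->|_]; rewrite ?andbT ?andbF.
Qed.
Arguments card_preimset_fibres {I T pi a}.

Section Polymatroid.
Variables (m : nat) (a : 'I_m -> nat) (rk : {set 'I_m} -> nat).
Hypothesis rkP : is_polymatroid a rk.

Lemma polymatroid_rank_le_sum (B : {set 'I_m}) : rk B <= \sum_(i in B) a i.
Proof.
case: rkP => rk0 _ rk_submod rk1.
suff rk_seq s : rk [set:: s] <= \sum_(i <- s) a i.
  by have := rk_seq (enum B); rewrite set_enum big_enum.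
elim: s => [|x s IH]; first by rewrite set_nil rk0.
rewrite set_cons big_cons; apply: leq_trans (leq_add (rk1 x) IH).
exact: leq_trans (leq_addr _ _) (rk_submod _ _).
Qed.

Lemma polymatroid_rankT_le (A : {set 'I_m}) : rk setT <= rk A + \sum_(i in ~: A) a i.
Proof.
case: rkP => _ _ rk_submod _.
have := rk_submod A (~: A); rewrite setUCr.
have := polymatroid_rank_le_sum (~: A); lia.
Qed.

Variables (T : finType) (pi : T -> 'I_m).
Hypothesis fibres : forall i, #|[set x | pi x == i]| = a i.

Lemma lift_rankT : lift_rank pi rk setT = rk setT.
Proof.
pose F A := rk A + #|[set: T] :\: pi @^-1: A|.
apply/eqP; rewrite eqn_leq; apply/andP; split.
  apply: leq_trans (bigmin_leq F set0 setT) _.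
  by rewrite /F preimsetT setDv cards0 addn0.
rewrite /lift_rank; have [A ->] := bigmin_attained F set0.
by rewrite /F setTD -preimsetC (card_preimset_fibres fibres) polymatroid_rankT_le.
Qed.

Lemma dual_lift_termE (U : {set T}) (S : {set 'I_m}) :
  polymatroid_dual a rk S + #|U :\: pi @^-1: S|
  = #|U| + (rk (~: S) + #|~: U :\: pi @^-1: (~: S)|) - rk setT.
Proof.
rewrite /polymatroid_dual.
(* This bound makes both truncated subtractions exact. *)
have := polymatroid_rankT_le (~: S); rewrite setCK.
have -> : ~: U :\: pi @^-1: (~: S) = ~: U :&: pi @^-1: S.
  by rewrite setDE preimsetC setCK.
have cardU := cardsID (pi @^-1: S) U.
have sumS : \sum_(i in S) a i = #|U :&: pi @^-1: S| + #|~: U :&: pi @^-1: S|.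
  by rewrite -(card_preimset_fibres fibres) -(cardsID U) setDE !(setIC (pi @^-1: S)).
lia.
Qed.

End Polymatroid.
Arguments lift_rankT {m a rk} rkP {T pi} fibres.
Arguments dual_lift_termE {m a rk} rkP {T pi} fibres.

Theorem proposition3p6 (m : nat) (a : 'I_m -> nat) (T : finType) (pi : T -> 'I_m)
  (rk : {set 'I_m} -> nat) :
  (forall i : 'I_m, #|[set x | pi x == i]| = a i) ->
  is_polymatroid a rk ->
  forall U : {set T},
    lift_rank pi (polymatroid_dual a rk) U = matroid_dual (lift_rank pi rk) U.
Proof.
move=> fibres rkP U; rewrite /matroid_dual (lift_rankT rkP fibres).
apply: (bigmin_homo_bij (f := fun x => #|U| + x - rk setT) (inv_bij setCK)) => [x y le_xy|S].
  by apply: leq_sub2r; rewrite leq_add2l.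
by rewrite (dual_lift_termE rkP fibres).
Qed.
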